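(* Let $0<t\le k<n$ be such that a Steiner system $S(t,k,n)$ exists. Then $$q'_0(t,k,n)\le \frac{\binom{n-1}{t-1}}{\binom{k-1}{t-1}}+1,\qquad q''_0(t,k,n)\le \frac{\binom{n}{t}}{\binom{k}{t}}-\frac{\binom{n-1}{t-1}}{\binom{k-1}{t-1}}+1.$$
   Context: $\mathbb{Z}_q=\{0,\dots,q-1\}$ (an alphabet); $\mathrm{wt}$ = number of nonzero coordinates; $d$ = Hamming distance; $J_q(n,w)$ = weight-$w$ words of $\mathbb{Z}_q^n$. An $(n,w,d)_q$ code of size $M$ is a subset $C\subseteq J_q(n,w)$ with $|C|=M$ and pairwise distances at least $d$. A Steiner system $S(t,k,n)$ is a pair $(N,B)$, $|N|=n$, $B$ a set of $k$-subsets (blocks) of $N$ with every $t$-subset of $N$ in exactly one block. For $t,k,n$ such that an $S(t,k,n)$ exists: $q'_0(t,k,n)$ is the smallest $q$ for which an $(n,k,2k-t+1)_q$ code of size $\binom{n}{t}/\binom{k}{t}$ exists, and $q''_0(t,k,n)$ is the smallest $q$ for which an $(n,n-k,n-t+1)_q$ code of size $\binom{n}{t}/\binom{k}{t}$ exists. *)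

From mathcomp Require Import all_boot.
Set Implicit Arguments. Unset Strict Implicit. Unset Printing Implicit Defensive.

Definition word (q n : nat) := {ffun 'I_n -> 'I_q}.

Definition wt (q n : nat) (x : word q n) : nat := #|[set i | nat_of_ord (x i) != 0]|.

Definition hdist (q n : nat) (x y : word q n) : nat := #|[set i | x i != y i]|.

Definition is_code (q n w d M : nat) (C : {set word q n}) : Prop :=
  [/\ #|C| = M,
      (forall x, x \in C -> wt x = w) &
      (forall x y, x \in C -> y \in C -> x != y -> (d <= hdist x y)%N)].

Definition code_exists (q n w d M : nat) : Prop :=
  exists C : {set word q n}, @is_code q n w d M C.

Definition steiner_system (t k n : nat) (B : {set {set 'I_n}}) : Prop :=
  (forall b, b \in B -> #|b| = k) /\
  (forall T : {set 'I_n}, #|T| = t -> #|[set b in B | T \subset b]| = 1).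

Definition steiner_exists (t k n : nat) : Prop := exists B : {set {set 'I_n}}, steiner_system t k B.

(* "q'_0(t,k,n) <= bound", i.e. the smallest q admitting an (n,k,2k-t+1)_q
   code of size C(n,t)/C(k,t) is at most bound. *)
Definition q0'_le (t k n bound : nat) : Prop :=
  exists2 q, q <= bound & code_exists q n k (2 * k - t + 1) ('C(n, t) %/ 'C(k, t)).

(* "q''_0(t,k,n) <= bound" for (n,n-k,n-t+1)_q codes of size C(n,t)/C(k,t). *)
Definition q0''_le (t k n bound : nat) : Prop :=
  exists2 q, q <= bound & code_exists q n (n - k) (n - t + 1) ('C(n, t) %/ 'C(k, t)).

From mathcomp Require Import all_boot zify.
Set Implicit Arguments. Unset Strict Implicit. Unset Printing Implicit Defensive.

(* Double counting in S(t,k,n) shows that every point lies in exactly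
   r = C(n-1,t-1)/C(k-1,t-1) of the b = C(n,t)/C(k,t) blocks, and two distinct
   blocks meet in fewer than t points.  Turn every block into a word supported
   on the block (resp. on its complement), the nonzero letter at a point being
   the rank of the block among the r (resp. b - r) blocks whose support contains
   that point.  Two such words then differ on the union of their supports, which
   has more than 2k - t (resp. n - t) points, and only r + 1 (resp. b - r + 1)
   letters are used. *)

Lemma card_sets_between (T : finType) (A X : {set T}) m :
  A \subset X -> #|A| <= m ->
  #|[set S : {set T} | [&& A \subset S, S \subset X & #|S| == m]]|
    = 'C(#|X| - #|A|, m - #|A|).
Proof.
move=> sAX leAm.
have -> : #|X| - #|A| = #|X :\: A| by rewrite cardsD (setIidPr sAX).
rewrite -cards_draws.
have disjA (U : {set T}) : U \subset X :\: A -> [disjoint U & A].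
  by move=> sUXA; rewrite (disjointWl sUXA) // disjoints_subset setDE subsetIr.
have addAK (U : {set T}) : U \subset X :\: A -> (U :|: A) :\: A = U.
  move=> sUXA; rewrite setDUl setDv setU0; apply/setDidPl.
  exact: disjA.
have -> : [set S : {set T} | [&& A \subset S, S \subset X & #|S| == m]]
    = (fun U : {set T} => U :|: A) @:
        [set U : {set T} | U \subset X :\: A & #|U| == m - #|A|].
  apply/setP => S; apply/idP/imsetP.
  - rewrite inE => /and3P[sAS sSX /eqP cardS]; exists (S :\: A).
      by rewrite inE setSD //= cardsD (setIidPr sAS) cardS.
    by rewrite setUC -[in LHS](setID S A) (setIidPr sAS).
  - case=> U; rewrite inE => /andP[sUXA /eqP cardU] ->.
    rewrite inE subsetUr subUset sAX andbT cardsU.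
    rewrite (disjoint_setI0 (disjA U sUXA)) cards0 subn0 cardU subnK //.
    by rewrite (subset_trans sUXA (subsetDl X A)) eqxx.
rewrite card_in_imset // => U V.
by rewrite !inE => /andP[sUXA _] /andP[sVXA _] eqUV; rewrite -(addAK U) // eqUV addAK.
Qed.

Lemma sum_card_incidence (I J : finType) (P : {pred I}) (Q : {pred J})
    (R : I -> J -> bool) :
  \sum_(i in P) #|[set j in Q | R i j]| = \sum_(j in Q) #|[set i in P | R i j]|.
Proof.
have card_incident (X Y : finType) (D : {pred Y}) (S : X -> Y -> bool) x :
    #|[set y in D | S x y]| = \sum_(y in D) S x y.
  by rewrite -sum1_card big_mkcond [RHS]big_mkcond; apply: eq_bigr => y _;
    rewrite inE; case: (y \in D); case: (S x y).
under eq_bigr => i _ do rewrite card_incident.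
rewrite exchange_big; apply: eq_bigr => j _.
by rewrite (card_incident _ _ _ (fun j i => R i j)).
Qed.

Lemma card_setIdC (T : finType) (A : {set T}) (P : pred T) :
  #|[set x in A | ~~ P x]| = #|A| - #|[set x in A | P x]|.
Proof.
rewrite -(cardsID [set x | P x] A) -setIdE addKn.
by apply: eq_card => x; rewrite !inE andbC.
Qed.

Section SteinerSystem.

Variables (t k n : nat) (B : {set {set 'I_n}}).
Hypothesis steinerB : steiner_system t k B.

Lemma steiner_blocks_through (A : {set 'I_n}) : #|A| <= t ->
  #|[set b in B | A \subset b]| * 'C(k - #|A|, t - #|A|) = 'C(n - #|A|, t - #|A|).
Proof.
case: steinerB => block_card uniqB leAt.
set Bs := [set b in B | A \subset b].
set Ts := [set T : {set 'I_n} | [&& A \subset T, T \subset setT & #|T| == t]].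
have blocks_through_T T : T \in Ts -> #|[set b in Bs | T \subset b]| = 1.
  rewrite inE => /and3P[sAT _ /eqP cardT]; rewrite -(uniqB T cardT).
  apply: eq_card => b; rewrite !inE -andbA; congr (_ && _).
  by apply/andb_idl => sTb; apply: subset_trans sAT sTb.
have tsets_in_block b :
    b \in Bs -> #|[set T in Ts | T \subset b]| = 'C(k - #|A|, t - #|A|).
  rewrite inE => /andP[bB sAb]; rewrite -(block_card b bB) -card_sets_between //.
  by apply: eq_card => T; rewrite !inE subsetT /= andbAC andbA.
have := sum_card_incidence (mem Bs) (mem Ts) (fun b T => T \subset b).
rewrite (eq_bigr _ tsets_in_block) (eq_bigr _ blocks_through_T).
rewrite sum_nat_const sum1_card => ->.
by rewrite card_sets_between ?subsetT // cardsT card_ord.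
Qed.

Lemma steiner_card : t <= k -> #|B| = 'C(n, t) %/ 'C(k, t).
Proof.
move=> letk; have := steiner_blocks_through (A := set0).
rewrite cards0 !subn0 => /(_ isT) <-.
have -> : [set b in B | set0 \subset b] = B.
  by apply/setP => b; rewrite inE sub0set andbT.
by rewrite mulnK // bin_gt0.
Qed.

Lemma steiner_point_degree i : 0 < t -> t <= k ->
  #|[set b in B | i \in b]| = 'C(n.-1, t.-1) %/ 'C(k.-1, t.-1).
Proof.
move=> t_gt0 letk; have := steiner_blocks_through (A := [set i]).
rewrite cards1 !subn1 => /(_ t_gt0) <-.
have -> : [set b in B | [set i] \subset b] = [set b in B | i \in b].
  by apply/setP => b; rewrite !inE sub1set.
by rewrite mulnK // bin_gt0 -!subn1 leq_sub2r.
Qed.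

Lemma steiner_meet_lt b b' : b \in B -> b' \in B -> b != b' -> #|b :&: b'| < t.
Proof.
case: steinerB => _ uniqB bB b'B neqbb'; rewrite ltnNge; apply/negP => letI.
have : 0 < #|[set T : {set 'I_n} | T \subset b :&: b' & #|T| == t]|.
  by rewrite cards_draws bin_gt0.
case/card_gt0P => T; rewrite inE => /andP[sTI /eqP cardT].
have : [set b; b'] \subset [set c in B | T \subset c].
  apply/subsetP => c; rewrite !inE => /orP[]/eqP->; rewrite ?bB ?b'B /=;
    apply: subset_trans sTI _; [exact: subsetIl | exact: subsetIr].
by move/subset_leq_card; rewrite cards2 neqbb' uniqB.
Qed.

End SteinerSystem.

Section SupportCode.

Variables (n m : nat) (B : {set {set 'I_n}}) (supp : {set 'I_n} -> {set 'I_n}).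
Hypothesis supp_degree : forall i, #|[set b in B | i \in supp b]| <= m.

Definition support_letter (b : {set 'I_n}) (i : 'I_n) : nat :=
  if i \in supp b then (index b (enum [set c in B | i \in supp c])).+1 else 0.

Definition support_word (b : {set 'I_n}) : word m.+1 n :=
  [ffun i => inord (support_letter b i)].

Lemma support_wordE b i : b \in B -> support_word b i = support_letter b i :> nat.
Proof.
move=> bB; rewrite ffunE inordK // ltnS /support_letter; case: ifP => // i_supp.
by apply: leq_trans (supp_degree i); rewrite cardE index_mem mem_enum inE bB.
Qed.

Lemma wt_support_word b : b \in B -> wt (support_word b) = #|supp b|.
Proof.
move=> bB; apply: eq_card => i.
by rewrite inE support_wordE // /support_letter; case: ifP.
Qed.

Lemma support_word_neq b b' : b \in B -> b' \in B -> b != b' ->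
  supp b :|: supp b' \subset [set i | support_word b i != support_word b' i].
Proof.
move=> bB b'B neqbb'; apply/subsetP => i; rewrite !inE => i_supp.
apply: contra neqbb' => /eqP/(congr1 val); rewrite /= !support_wordE // /support_letter.
case: (boolP (i \in supp b)) => ib; case: (boolP (i \in supp b')) => ib' //=;
  last by move: i_supp; rewrite (negbTE ib) (negbTE ib').
case=> /(congr1 (nth b (enum [set c in B | i \in supp c]))).
by rewrite !nth_index ?mem_enum ?inE ?bB ?b'B ?ib ?ib' // => ->.
Qed.

Lemma support_code_exists w d :
  (forall b, b \in B -> #|supp b| = w) -> 0 < d ->
  (forall b b', b \in B -> b' \in B -> b != b' -> d <= #|supp b :|: supp b'|) ->
  code_exists m.+1 n w d #|B|.
Proof.
move=> supp_card d_gt0 supp_far.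
have far b b' : b \in B -> b' \in B -> b != b' ->
    d <= hdist (support_word b) (support_word b').
  move=> bB b'B neqbb'; apply: leq_trans (supp_far b b' bB b'B neqbb') _.
  exact/subset_leq_card/support_word_neq.
exists (support_word @: B); split.
- rewrite card_in_imset // => b b' bB b'B eq_words; apply/eqP/negPn/negP => neqbb'.
  have := far b b' bB b'B neqbb'; rewrite eq_words /hdist.
  suff -> : [set i | support_word b' i != support_word b' i] = set0.
    by rewrite cards0 leqNgt d_gt0.
  by apply/setP => i; rewrite !inE eqxx.
- by move=> x /imsetP[b bB ->]; rewrite wt_support_word // supp_card.
- move=> x y /imsetP[b bB ->] /imsetP[b' b'B ->] neq_words.
  by apply: far => //; apply: contraNneq neq_words => ->.
Qed.

End SupportCode.

Theorem mainTheorem7 (t k n : nat) :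
  0 < t -> t <= k -> k < n -> steiner_exists t k n ->
  q0'_le t k n ('C(n.-1, t.-1) %/ 'C(k.-1, t.-1) + 1) /\
  q0''_le t k n ('C(n, t) %/ 'C(k, t) - 'C(n.-1, t.-1) %/ 'C(k.-1, t.-1) + 1).
Proof.
move=> t_gt0 letk ltkn [B steinerB].
have cardB := steiner_card steinerB letk.
have degree := steiner_point_degree steinerB _ t_gt0 letk.
have meet_lt := steiner_meet_lt steinerB.
case: (steinerB) => block_card _.
set r := 'C(n.-1, t.-1) %/ 'C(k.-1, t.-1) in degree *.
split.
- exists r.+1; first by rewrite addn1.
  rewrite -cardB; apply: (@support_code_exists _ _ _ id)
    => [i|||b b' bB b'B neqbb'].
  + by rewrite degree.
  + exact: block_card.
  + lia.
  + rewrite cardsU (block_card b bB) (block_card b' b'B).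
    have := meet_lt b b' bB b'B neqbb'; lia.
- exists (#|B| - r).+1; first by rewrite cardB addn1.
  rewrite -cardB; apply: (@support_code_exists _ _ _ (fun b => ~: b))
    => [i|b bB||b b' bB b'B neqbb'].
  + rewrite -(degree i) -card_setIdC.
    by apply/eq_leq/eq_card => b; rewrite !inE.
  + by have := cardsC b; rewrite card_ord (block_card b bB); lia.
  + lia.
  + have := cardsC (b :&: b'); rewrite card_ord -setCI.
    have := meet_lt b b' bB b'B neqbb'; lia.
Qed.
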